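(* Let $d=1$. There is a constant $c_1$ depending only on the dimension such that for all $N\ge1$, $n\ge1$ and integers $0=i_0<i_1<\cdots<i_n\le N$, $$\sum_{x_1,\dots,x_n\in\mathbb{Z}}\ \prod_{k=1}^n p_0^2(i_k-i_{k-1},x_k-x_{k-1})\left(\sum_{x\in\mathbb{Z}}x^2p_0(N-i_n,x-x_n)\right)^2\le c_1^nN^2\prod_{k=1}^n(i_k-i_{k-1})^{-1/2},$$ where $x_0=0$.
   Context: $p_0(n,x)$ is the probability that simple random walk on $\mathbb{Z}$ started at $0$ is at $x$ at time $n$. *)

From HB Require Import structures.
From mathcomp Require Import all_boot all_order all_algebra.
From mathcomp Require Import all_classical all_reals all_analysis.
Set Implicit Arguments. Unset Strict Implicit. Unset Printing Implicit Defensive.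
Import Order.TTheory GRing.Theory Num.Theory.
Local Open Scope ring_scope.
Local Open Scope classical_set_scope.

Fixpoint p0 {R : realType} (n : nat) (x : int) : R :=
  match n with
  | 0 => if x == 0 then 1 else 0
  | m.+1 => (p0 m (x - 1) + p0 m (x + 1)) / 2
  end.

Definition second_moment {R : realType} (M : nat) (xn : int) : \bar R :=
  \esum_(x in [set: int]) ((x%:~R ^+ 2 * p0 M (x - xn) : R)%:E).

(* Iterated sum over x_k, ..., x_n in Z (m = number of remaining variables,
   k = n - m + 1 is the index of the next variable), with x_{k-1} = xprev. *)
Fixpoint nested_sum {R : realType} (i : nat -> nat) (N n : nat) (m : nat)
  (xprev : int) : \bar R :=
  match m with
  | 0 => (second_moment (N - i n) xprev * second_moment (N - i n) xprev)%E
  | m'.+1 =>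
      let k := (n - m')%N in
      \esum_(x in [set: int])
        (((p0 (i k - i k.-1) (x - xprev) : R) ^+ 2)%:E
         * @nested_sum R i N n m' x)%E
  end.

Definition lhs10 {R : realType} (i : nat -> nat) (N n : nat) : \bar R :=
  @nested_sum R i N n n 0.

From HB Require Import structures.
From mathcomp Require Import all_boot all_order all_algebra.
From mathcomp Require Import all_classical all_reals all_analysis.
From mathcomp Require Import zify ring lra.
Import Order.TTheory GRing.Theory Num.Theory.

(* The central binomial estimate C(2k,k)^2 (k+1) <= 16^k gives the local bound
   p0 m x <= 2 m^(-1/2).  In each factor p0^2 of the nested sum, one copy of p0
   is replaced by this bound and the other is kept as a transition kernel.  The
   function (b, y) |-> y^4 + 6 b y^2 + 3 b^2 is superharmonic for the space-time
   walk (b = time still to run) and dominates the square of the second moment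
   y^2 + b, so the variables x_n, ..., x_1 can be summed out one at a time at a
   cost of 2 (i_k - i_(k-1))^(-1/2) each, ending with 3 N^2 at x_0 = 0. *)

Lemma bin_odd_mid k : 'C(k.*2.+1, k.+1) = 'C(k.*2.+1, k).
Proof.
apply/eqP; rewrite -(@eqn_pmul2l k.+1) // mul_bin_left -addnn.
by rewrite (_ : (k + k).+1 - k = k.+1) //; lia.
Qed.

Lemma bin_central_succ k : 'C(k.*2.+2, k.+1) = 2 * 'C(k.*2.+1, k).
Proof.
apply/eqP; rewrite -(@eqn_pmul2l k.+1) // -mul_bin_diag /= -addnn; apply/eqP; ring.
Qed.

Lemma bin_central_rec k : k.+1 * 'C(k.*2.+1, k) = k.*2.+1 * 'C(k.*2, k).
Proof. by rewrite -bin_odd_mid -mul_bin_diag. Qed.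

Lemma bin_central_sq_le k : 'C(k.*2, k) ^ 2 * k.+1 <= 16 ^ k.
Proof.
elim: k => [|k IH] //.
rewrite doubleS bin_central_succ -(@leq_pmul2l (k.+1 ^ 3)) ?expn_gt0 //.
have -> : (k.+1 ^ 3 * ((2 * 'C(k.*2.+1, k)) ^ 2 * k.+2)
          = 4 * (k.+1 * 'C(k.*2.+1, k)) ^ 2 * (k.+1 * k.+2)) by ring.
rewrite bin_central_rec.
have -> : (4 * (k.*2.+1 * 'C(k.*2, k)) ^ 2 * (k.+1 * k.+2)
          = (4 * k.*2.+1 ^ 2 * k.+2) * ('C(k.*2, k) ^ 2 * k.+1)) by ring.
have poly : 4 * k.*2.+1 ^ 2 * k.+2 <= 16 * k.+1 ^ 3.
  rewrite (_ : 16 * k.+1 ^ 3 = 4 * k.*2.+1 ^ 2 * k.+2 + 4 * (3 * k + 2)) ?leq_addr //.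
  by rewrite -mul2n; ring.
apply: leq_trans (leq_mul poly IH) _.
by rewrite [16 ^ k.+1]expnS mulnCA mulnA.
Qed.

Lemma leq_binS m j : j.+1 <= m - j -> 'C(m, j) <= 'C(m, j.+1).
Proof. by move=> h; rewrite -(@leq_pmul2l j.+1) // mul_bin_left leq_mul. Qed.

Lemma leq_bin_half m j : 'C(m, j) <= 'C(m, m./2).
Proof.
have hm := odd_double_half m; rewrite -addnn in hm.
have up d j' : j' + d = m./2 -> 'C(m, j') <= 'C(m, m./2).
  elim: d j' => [|d IH] j' hj; first by rewrite -hj addn0.
  by apply: leq_trans (IH j'.+1 _); [apply: leq_binS; case: (odd m) hm|]; lia.
case: (leqP j m./2) => hj; first by apply: (up (m./2 - j)); lia.
case: (leqP j m) => hjm; last by rewrite bin_small.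
by rewrite -bin_sub //; apply: (up (m./2 - (m - j))); case: (odd m) hm; lia.
Qed.

Lemma bin_half_sq_mul_le m : 'C(m, m./2) ^ 2 * m <= 2 * 4 ^ m.
Proof.
have := odd_double_half m; set k := m./2 => <-.
have sq4 : 4 ^ k.*2 = 16 ^ k by rewrite -mul2n expnM.
case: (odd m) => /=; last first.
  apply: leq_trans (_ : 2 * ('C(k.*2, k) ^ 2 * k.+1) <= _).
    by rewrite -mul2n mulnCA leq_mul2l leq_pmul2l // ltnW ?orbT.
  by rewrite add0n sq4 leq_pmul2l // bin_central_sq_le.
have := bin_central_sq_le k.+1; rewrite doubleS bin_central_succ => h.
rewrite add1n [4 ^ _]expnS sq4 [16 ^ _]expnS -addnn in h *; nia.
Qed.

Lemma bin_sq_mul_le m j : 'C(m, j) ^ 2 * m <= 2 * 4 ^ m.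
Proof.
apply: leq_trans (bin_half_sq_mul_le m).
by rewrite leq_mul2r leq_exp2r ?leq_bin_half ?orbT.
Qed.

Local Open Scope ring_scope.

Section RandomWalk.
Variable R : realType.

Lemma p0_ge0 m x : 0 <= p0 (R:=R) m x.
Proof.
elim: m x => [|m IH] x /=; first by case: ifP.
by rewrite divr_ge0 // addr_ge0.
Qed.

(* The j-th summand counts the paths with j up-steps. *)
Definition walk_count m (x : int) : R :=
  \sum_(0 <= j < m.+1) ((x == ((2 * j)%N : int) - (m : int))%:R * 'C(m, j)%:R).

Lemma walk_countS m x : walk_count m.+1 x = walk_count m (x - 1) + walk_count m (x + 1).
Proof.
rewrite /walk_count big_nat_recl // bin0.
under eq_bigr do rewrite binS natrD mulrDr.
rewrite big_split /= addrA [X in _ = X]addrC; congr (_ + _); last first.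
  by apply: eq_bigr => j _; congr (_%:R * _); apply/eqP/eqP; lia.
rewrite [in RHS]big_nat_recl // bin0 [X in _ + X = _]big_nat_recr //= bin_small // mulr0 addr0.
by congr (_ + _); [|apply: eq_bigr => j _]; congr (_%:R * _); apply/eqP/eqP; lia.
Qed.

Lemma p0_walk_count m x : p0 (R:=R) m x = walk_count m x / 2 ^+ m.
Proof.
elim: m x => [|m IH] x.
  by rewrite /walk_count big_nat1 /= expr0 divr1 mulr1; case: (x == 0).
by rewrite /= !IH walk_countS exprS; field; rewrite expf_neq0 ?pnatr_eq0.
Qed.

Lemma walk_count_bin m x : (exists j, walk_count m x = 'C(m, j)%:R) \/ walk_count m x = 0.
Proof.
rewrite /walk_count big_mkord.
case: (boolP [exists j : 'I_m.+1, x == ((2 * j)%N : int) - (m : int)]).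
  move=> /existsP [j0 hj0]; left; exists j0.
  rewrite (bigD1 j0) //= (eqP hj0) eqxx mul1r big1 ?addr0 // => j hj.
  case: eqP; rewrite ?mul0r // => e; exfalso.
  by move: hj; rewrite -val_eqE /=; move/eqP; apply; lia.
rewrite negb_exists => /forallP h; right; apply: big1 => j _.
by rewrite (negbTE (h j)) mul0r.
Qed.

Lemma p0_sq_mul_le m x : p0 (R:=R) m x ^+ 2 * m%:R <= 2.
Proof.
rewrite p0_walk_count.
case: (walk_count_bin m x) => [[j ->]|->]; last by rewrite mul0r expr0n /= mul0r.
have := bin_sq_mul_le m j; rewrite -(ler_nat R) !natrM !natrX => h.
rewrite expr_div_n mulrAC ler_pdivrMr ?exprn_gt0 // -exprM mulnC exprM.
by rewrite (_ : (2 : R) ^+ 2 = 4%:R) // expr2 -natrM.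
Qed.

Lemma p0_le_powR m x : (0 < m)%N -> p0 (R:=R) m x <= 2 * m%:R `^ (- (1 / 2)).
Proof.
move=> m_gt0; rewrite powRN div1r powR12_sqrt //.
set s := Num.sqrt (m%:R : R).
have s_gt0 : 0 < s by rewrite sqrtr_gt0 ltr0n.
have h := p0_sq_mul_le m x; rewrite -(sqr_sqrtr (ler0n R m)) -/s -exprMn in h.
have : 0 <= p0 (R:=R) m x * s by rewrite mulr_ge0 ?p0_ge0 ?sqrtr_ge0.
rewrite ler_pdivlMr //; nra.
Qed.

(* b is the time still to run: if S is the walk, g (T - t) (S t) is a supermartingale. *)
Definition walk_superharmonic (g : nat -> int -> R) :=
  forall b y, g b (y + 1) + g b (y - 1) <= 2 * g b.+1 y.

Local Open Scope ereal_scope.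

Lemma esum_p0_le (g : nat -> int -> R) :
  (forall b y, (0 <= g b y)%R) -> walk_superharmonic g ->
  forall D a c x, (0 <= c)%R ->
  \esum_(y in [set: int]) ((c * p0 D (y - x) * g a y)%R%:E) <= (c * g (a + D)%N x)%:E.
Proof.
move=> g_ge0 g_sh; elim=> [|D IH] a c x c_ge0.
  rewrite addn0 (eq_esum (b := fun y => if y \in [set x]%classic then (c * g a x)%:E else 0)).
    by rewrite -esum_mkcond esum_set1 // lee_fin mulr_ge0.
  move=> y _ /=; rewrite in_set1 subr_eq0; case: eqP => [->|]; first by rewrite mulr1.
  by rewrite mulr0 mul0r.
have c2_ge0 : (0 <= c / 2)%R by rewrite divr_ge0.
rewrite (eq_esum (b := fun y => ((c / 2) * p0 D (y - (x + 1)) * g a y)%R%:E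
                               + ((c / 2) * p0 D (y - (x - 1)) * g a y)%R%:E)); last first.
  move=> y _ /=; rewrite -EFinD (_ : y - x - 1 = y - (x + 1))%R; last by ring.
  by rewrite (_ : y - x + 1 = y - (x - 1))%R; [congr (_%:E); ring | ring].
rewrite esumD; last 2 first.
- by move=> y _; rewrite lee_fin !mulr_ge0 ?p0_ge0.
- by move=> y _; rewrite lee_fin !mulr_ge0 ?p0_ge0.
apply: le_trans (leeD (IH a _ (x + 1)%R c2_ge0) (IH a _ (x - 1)%R c2_ge0)) _.
rewrite -EFinD lee_fin addnS.
have := g_sh (a + D)%N x; have := g_ge0 (a + D)%N (x + 1)%R; have := g_ge0 (a + D)%N (x - 1)%R.
nra.
Qed.

Local Close Scope ereal_scope.

(* For S_b the walk at time b, moment2 b y = E (y + S_b)^2 and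
   moment4 b y = E (y + S_b)^4 + 2 b. *)
Definition moment2 (b : nat) (y : int) : R := y%:~R ^+ 2 + b%:R.
Definition moment4 (b : nat) (y : int) : R :=
  y%:~R ^+ 4 + 6 * b%:R * y%:~R ^+ 2 + 3 * b%:R ^+ 2.

Lemma moment4_at0 b : moment4 b 0 = 3 * b%:R ^+ 2.
Proof. by rewrite /moment4 (_ : 0%:~R = 0 :> R) // !expr0n mulr0 !add0r. Qed.

Lemma moment2_ge0 b y : 0 <= moment2 b y.
Proof. by rewrite addr_ge0 // exprn_even_ge0. Qed.

Lemma moment4_ge0 b y : 0 <= moment4 b y.
Proof.
rewrite /moment4 (_ : 4 = 2 * 2)%N // exprM.
have : 0 <= y%:~R ^+ 2 :> R by rewrite exprn_even_ge0.
have : 0 <= b%:R :> R by [].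
nra.
Qed.

Lemma moment2_superharmonic : walk_superharmonic moment2.
Proof. by move=> b y; rewrite /moment2 intrD intrB -[b.+1]addn1 natrD /=; nra. Qed.

Lemma moment4_superharmonic : walk_superharmonic moment4.
Proof. by move=> b y; rewrite /moment4 intrD intrB -[b.+1]addn1 natrD /=; nra. Qed.

Lemma sqr_moment2_le_moment4 b y : moment2 b y ^+ 2 <= moment4 b y.
Proof.
rewrite /moment2 /moment4 (_ : 4 = 2 * 2)%N // exprM.
have : 0 <= y%:~R ^+ 2 :> R by rewrite exprn_even_ge0.
have : 0 <= b%:R :> R by [].
nra.
Qed.

Local Open Scope ereal_scope.

Lemma second_moment_ge0 M xn : 0 <= second_moment (R:=R) M xn.
Proof. by apply: esum_ge0 => y _; rewrite lee_fin mulr_ge0 ?p0_ge0 ?exprn_even_ge0. Qed.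

Lemma second_moment_le M xn : second_moment (R:=R) M xn <= (moment2 M xn)%:E.
Proof.
have := @esum_p0_le moment2 moment2_ge0 moment2_superharmonic M 0 1%R xn ler01.
rewrite add0n mul1r; apply: le_trans; apply: le_esum => y _.
by rewrite lee_fin mul1r /moment2 addr0 mulrC.
Qed.

Local Close Scope ereal_scope.

Lemma incr_le_last (i : nat -> nat) n :
  (forall k, (k < n)%N -> (i k < i k.+1)%N) -> forall k, (k <= n)%N -> (i k <= i n)%N.
Proof.
elim: n => [|n IH] i_incr k; first by rewrite leqn0 => /eqP ->.
rewrite leq_eqVlt => /predU1P [-> //|]; rewrite ltnS => k_le.
apply: leq_trans (IH _ k k_le) (ltnW (i_incr n _)) => // j j_lt.
exact/i_incr/ltnW.
Qed.

Definition tail_weight (i : nat -> nat) (n m : nat) : R :=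
  \prod_((n - m).+1 <= k < n.+1) (2 * ((i k - i k.-1)%N)%:R `^ (- (1 / 2))).

Lemma tail_weight_full i n :
  tail_weight i n n = 2 ^+ n * \prod_(1 <= k < n.+1) ((i k - i k.-1)%N)%:R `^ (- (1 / 2)).
Proof. by rewrite /tail_weight subnn big_split prodr_const_nat subSS subn0. Qed.

Lemma tail_weight_ge0 i n m : 0 <= tail_weight i n m.
Proof. by apply: prodr_ge0 => k _; rewrite mulr_ge0 ?powR_ge0. Qed.

Lemma tail_weightS i n m : (m < n)%N ->
  tail_weight i n m.+1
  = 2 * ((i (n - m)%N - i (n - m)%N.-1)%N)%:R `^ (- (1 / 2)) * tail_weight i n m.
Proof.
move=> m_lt; rewrite /tail_weight (_ : (n - m.+1).+1 = n - m)%N; last by lia.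
by rewrite big_ltn //; lia.
Qed.

Local Open Scope ereal_scope.

Lemma nested_sum_le (i : nat -> nat) N n :
  (forall k, (k < n)%N -> (i k < i k.+1)%N) -> (i n <= N)%N ->
  forall m, (m <= n)%N -> forall x,
  nested_sum (R:=R) i N n m x <= (tail_weight i n m * moment4 (N - i (n - m)%N)%N x)%:E.
Proof.
move=> i_incr i_le; elim=> [|m IH] m_le x.
  rewrite /= /tail_weight subn0 big_geq // mul1r.
  have sm_le := second_moment_le (N - i n) x; have sm_ge0 := second_moment_ge0 (N - i n) x.
  apply: le_trans (lee_pmul sm_ge0 sm_ge0 sm_le sm_le) _.
  by rewrite -EFinM lee_fin -expr2 sqr_moment2_le_moment4.
set k := (n - m)%N; set D := (i k - i k.-1)%N; set r : R := (D%:R `^ (- (1 / 2)))%R.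
have k_gt0 : (0 < k)%N by rewrite /k; lia.
have ik_gt : (i k.-1 < i k)%N by rewrite -[in i k](prednK k_gt0) i_incr // /k; lia.
have ik_le : (i k <= N)%N by exact: leq_trans (@incr_le_last i n i_incr k (leq_subr m n)) i_le.
have D_gt0 : (0 < D)%N by rewrite subn_gt0.
rewrite /= -/k -/D.
apply: (@le_trans _ _ (\esum_(y in [set: int])
   (((2 * r * tail_weight i n m) * p0 D (y - x) * moment4 (N - i k) y)%R%:E))).
  apply: le_esum => y _.
  apply: le_trans (lee_wpmul2l _ (IH (ltnW m_le) y)) _; first by rewrite lee_fin exprn_even_ge0.
  rewrite -EFinM lee_fin -/k.
  have W_ge0 : (0 <= p0 D (y - x) * (tail_weight i n m * moment4 (N - i k) y))%R.
    by rewrite !mulr_ge0 ?p0_ge0 ?tail_weight_ge0 ?moment4_ge0.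
  have := ler_wpM2r W_ge0 (@p0_le_powR D (y - x) D_gt0); rewrite -/r.
  lra.
apply: le_trans (@esum_p0_le moment4 moment4_ge0 moment4_superharmonic _ _ _ _ _) _.
  by rewrite !mulr_ge0 ?tail_weight_ge0 ?powR_ge0.
rewrite lee_fin tail_weightS // -/k -/D -/r -mulrA.
have -> : (n - m.+1 = k.-1)%N by rewrite /k; lia.
by rewrite (_ : N - i k + D = N - i k.-1)%N // /D; lia.
Qed.

End RandomWalk.

Theorem lemma10 (R : realType) :
  exists c1 : R,
  forall (N n : nat) (i : nat -> nat),
    (1 <= N)%N -> (1 <= n)%N ->
    i 0%N = 0%N ->
    (forall k : nat, (k < n)%N -> (i k < i k.+1)%N) ->
    (i n <= N)%N ->
    (lhs10 (R:=R) i N n <=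
      ((c1 ^+ n) * (N%:R ^+ 2)
       * \prod_(1 <= k < n.+1) (((i k - i k.-1)%N)%:R `^ (- (1 / 2))))%:E)%E.
Proof.
exists 6 => N n i _ n_gt0 i0 i_incr i_le.
apply: le_trans (@nested_sum_le R i N n i_incr i_le n (leqnn n) 0) _.
rewrite subnn i0 subn0 tail_weight_full moment4_at0 lee_fin.
set P := \prod_(1 <= k < n.+1) _.
have P_ge0 : 0 <= P by apply: prodr_ge0 => k _; rewrite powR_ge0.
have three_le : (3 : R) <= 3 ^+ n.
  by rewrite -(prednK n_gt0) exprS; apply: ler_peMr; rewrite ?ler0n // exprn_ege1 // ler1n.
rewrite (_ : (6 : R) = 2 * 3) ?exprMn; last by rewrite -natrM.
rewrite (_ : _ * P * _ = 2 ^+ n * P * N%:R ^+ 2 * 3); last by ring.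
rewrite (_ : _ * _ * P = 2 ^+ n * P * N%:R ^+ 2 * 3 ^+ n); last by ring.
by rewrite ler_wpM2l // !mulr_ge0 // exprn_ge0.
Qed.
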